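(* Let ${\bm X}=\{1,\dots,n\}$, ${\bm Y}=\{1,\dots,m\}$, let $m^{\bm X}$ ($n\times n$) and $m^{\bm Y}$ ($m\times m$) be row-stochastic transition matrices, $C\in\mathbb{R}_+^{n\times m}$ a cost matrix, $\delta\in(0,1]$, $\epsilon>0$. Let $C^{\epsilon,\delta,(\infty)}$ be the unique matrix satisfying $C^{\epsilon,\delta,(\infty)}_{ij}=\delta C_{ij}+(1-\delta)d^{\epsilon}_{\mathrm W}(m^{\bm X}_i,m^{\bm Y}_j;C^{\epsilon,\delta,(\infty)})$ for all $i,j$. For each $(i,j)$ let $P_{ij}=(P_{ij}^{kl})_{k,l}$ be the optimal (primal) plan and $f_{ij}=(f^k_{ij})_k$, $g_{ij}=(g^l_{ij})_l$ the dual solutions of the problem $d^\epsilon_{\mathrm W}(m^{\bm X}_i,m^{\bm Y}_j;C^{\epsilon,\delta,(\infty)})$. Define tensors $P=(P^{kl}_{ij})$, $F^{kk'}_{ij}=f^{k'}_{ij}\mathbb{1}_{i=k}$, $G^{ll'}_{ij}=g^{l'}_{ij}\mathbb{1}_{j=l}$, and the gradient tensors $\Delta^{kl}_{ij}=\partial C^{\epsilon,\delta,(\infty)}_{ij}/\partial C_{kl}$, $\Gamma^{kk'}_{ij}=\partial C^{\epsilon,\delta,(\infty)}_{ij}/\partial m^{\bm X}_{kk'}$, $\Theta^{ll'}_{ij}=\partial C^{\epsilon,\delta,(\infty)}_{ij}/\partial m^{\bm Y}_{ll'}$. Viewing these tensors as matrices with rows indexed by the pair $(i,j)$ and columns by the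 upper index pair (so $P$ and $\Delta$ are $nm\times nm$), and letting $I_{nm}$ be the $nm\times nm$ identity, $$\Delta=\delta\big(I_{nm}-(1-\delta)P\big)^{-1},\quad\Gamma=(1-\delta)\big(I_{nm}-(1-\delta)P\big)^{-1}F,\quad\Theta=(1-\delta)\big(I_{nm}-(1-\delta)P\big)^{-1}G.$$
   Context: For $\alpha\in\mathcal{P}({\bm X}),\beta\in\mathcal{P}({\bm Y})$ and cost $D$, $d^{\epsilon}_{\mathrm W}(\alpha,\beta;D)=\min_{P\in\mathcal{C}(\alpha,\beta)}\sum_{k,l}P_{kl}D_{kl}+\epsilon\sum_{k,l}P_{kl}\log P_{kl}$, where $\mathcal{C}(\alpha,\beta)$ is the set of nonnegative $n\times m$ matrices with row sums $\alpha$ and column sums $\beta$; the dual solutions $f,g$ are the optimal dual variables (potentials) associated with the row- and column-marginal constraints. $m^{\bm X}_i$ denotes the $i$-th row of $m^{\bm X}$, $m^{\bm X}_{kk'}$ its $(k,k')$ entry. *)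

From HB Require Import structures.
From mathcomp Require Import all_boot all_order all_algebra.
From mathcomp Require Import all_classical all_reals all_analysis.
Set Implicit Arguments. Unset Strict Implicit. Unset Printing Implicit Defensive.
Import Order.TTheory GRing.Theory Num.Theory.
Local Open Scope ring_scope.
Local Open Scope classical_set_scope.

Definition coupling (R : realType) (n m : nat) (a : 'I_n -> R) (b : 'I_m -> R)
  (P : 'M[R]_(n, m)) : Prop :=
  [/\ (forall k l, 0 <= P k l),
      (forall k, \sum_(l < m) P k l = a k) &
      (forall l, \sum_(k < n) P k l = b l)].

(* entropic objective  sum P_kl D_kl + eps sum P_kl log P_kl  (0 log 0 = 0) *)
Definition ent_obj (R : realType) (n m : nat) (eps : R) (D P : 'M[R]_(n, m)) : R :=
  \sum_(k < n) \sum_(l < m) P k l * D k l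
  + eps * \sum_(k < n) \sum_(l < m) P k l * ln (P k l).

Definition dW (R : realType) (n m : nat) (eps : R) (a : 'I_n -> R) (b : 'I_m -> R)
  (D : 'M[R]_(n, m)) : R :=
  inf [set ent_obj eps D P | P in coupling a b].

Definition opt_plan (R : realType) (n m : nat) (eps : R) (a : 'I_n -> R) (b : 'I_m -> R)
  (D P : 'M[R]_(n, m)) : Prop :=
  coupling a b P /\ forall Q, coupling a b Q -> ent_obj eps D P <= ent_obj eps D Q.

(* Lagrangian dual of the entropic problem (f, g: multipliers of the row and
   column marginal constraints) *)
Definition dual_obj (R : realType) (n m : nat) (eps : R) (a : 'I_n -> R) (b : 'I_m -> R)
  (D : 'M[R]_(n, m)) (f : 'I_n -> R) (g : 'I_m -> R) : R :=
  \sum_(k < n) f k * a k + \sum_(l < m) g l * b l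
  - eps * \sum_(k < n) \sum_(l < m) expR ((f k + g l - D k l) / eps - 1).

Definition opt_dual (R : realType) (n m : nat) (eps : R) (a : 'I_n -> R) (b : 'I_m -> R)
  (D : 'M[R]_(n, m)) (f : 'I_n -> R) (g : 'I_m -> R) : Prop :=
  forall f' g', dual_obj eps a b D f' g' <= dual_obj eps a b D f g.

Definition row_stochastic (R : realType) (n : nat) (M : 'M[R]_n) : Prop :=
  (forall i j, 0 <= M i j) /\ (forall i, \sum_(j < n) M i j = 1).

Definition fixed_point (R : realType) (n m : nat) (eps delta : R)
  (C : 'M[R]_(n, m)) (mX : 'M[R]_n) (mY : 'M[R]_m) (M : 'M[R]_(n, m)) : Prop :=
  forall i j, M i j = delta * C i j
                      + (1 - delta) * dW eps (fun k => mX i k) (fun l => mY j l) M.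

(* a 4-index tensor T^{kl}_{ij} viewed as a matrix with rows indexed by the
   pair (i,j) and columns by the pair (k,l) *)
Definition flat4 (R : realType) (n1 n2 n3 n4 : nat)
  (T : 'I_n1 -> 'I_n2 -> 'I_n3 -> 'I_n4 -> R) : 'M[R]_(n1 * n2, n3 * n4) :=
  \sum_(i < n1) \sum_(j < n2) \sum_(k < n3) \sum_(l < n4)
    T i j k l *: delta_mx (mxvec_index i j) (mxvec_index k l).

(* By the Fenchel-Young
   inequality, [ent_obj P - dual_obj f g] is a sum of nonnegative gaps vanishing
   exactly when [P] is the Gibbs kernel [exp ((f + g - D) / eps - 1)], and the
   stationarity of optimal potentials makes that kernel a coupling; so the optimal
   plan is the Gibbs kernel and [dW] is its entropic cost.
   Perturbing the marginals by [t (al, be)] and the cost by [t V], the plan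
   [P + t (al b^T + a be^T)] is still a coupling and [(f, g)] still a dual candidate,
   which squeezes [dW] between a primal and a dual value: [dW] moves by
   [t (<P, V> + <f, al> + <g, be>) + O(t^2)].
   As [dW] is 1-Lipschitz in the cost, the fixed-point map is a
   [(1 - delta)]-contraction for the sup norm. Hence [Cinf C mX mY + t v], where
   [v] solves [v = delta E + (1 - delta) (P v + f HX + g HY)], is within [O(t^2)]
   of the perturbed fixed point, i.e. [v] is the directional derivative; the linear
   system is solved by [(I - (1 - delta) P)^-1], which exists because [P] is
   stochastic. *)

From HB Require Import structures.
From mathcomp Require Import all_boot all_order all_algebra.
From mathcomp Require Import all_classical all_reals all_analysis.
From mathcomp Require Import ring lra.
Import Order.TTheory GRing.Theory Num.Theory.
Import numFieldNormedType.Exports.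
Set Implicit Arguments. Unset Strict Implicit. Unset Printing Implicit Defensive.
Local Open Scope ring_scope.

Lemma expR_eq1Dx (R : realType) (u : R) : expR u = 1 + u -> u = 0.
Proof. by apply: contra_eq => /expR_gt1Dx/gt_eqF ->. Qed.

Lemma expR_le1Dx_sqr (R : realType) (u : R) :
  `|u| <= 1 / 2 -> expR u <= 1 + u + 2 * u ^+ 2.
Proof.
rewrite ler_norml => /andP[u_ge u_le].
have := expR_ge1Dx (- u); have := expR_gt0 u.
have : expR u * expR (- u) = 1 by rewrite -expRD subrr expR0.
nra.
Qed.

Definition fenchel_gap (R : realType) (x y : R) := x * ln x - x * y + expR (y - 1).

Lemma fenchel_gapE (R : realType) (x y : R) : 0 < x ->
  fenchel_gap x y = x * (expR (y - 1 - ln x) - 1 - (y - 1 - ln x)).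
Proof.
move=> x_gt0; rewrite /fenchel_gap.
have -> : expR (y - 1) = x * expR (y - 1 - ln x).
  by rewrite mulrC -[x in _ * x]lnK ?posrE // -expRD subrK.
ring.
Qed.

Lemma fenchel_gap_ge0 (R : realType) (x y : R) : 0 <= x -> 0 <= fenchel_gap x y.
Proof.
rewrite le0r => /predU1P[->|x_gt0].
  by rewrite /fenchel_gap !mul0r subrr add0r ltW ?expR_gt0.
rewrite fenchel_gapE // mulr_ge0 ?(ltW x_gt0) //.
by have := expR_ge1Dx (y - 1 - ln x); lra.
Qed.

Lemma fenchel_gap_eq0 (R : realType) (x y : R) : 0 <= x ->
  fenchel_gap x y = 0 -> x = expR (y - 1).
Proof.
rewrite le0r => /predU1P[->|x_gt0].
  by rewrite /fenchel_gap !mul0r subrr add0r => /eqP; rewrite gt_eqF ?expR_gt0.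
rewrite fenchel_gapE // => /eqP; rewrite mulf_eq0 gt_eqF //= => /eqP gap0.
have u0 : y - 1 - ln x = 0 by apply: expR_eq1Dx; lra.
by rewrite (_ : y - 1 = ln x) ?lnK ?posrE //; lra.
Qed.

Lemma fenchel_gap_expR (R : realType) (y : R) : fenchel_gap (expR (y - 1)) y = 0.
Proof. by rewrite /fenchel_gap expRK; ring. Qed.

(* [a] is a subgradient at [0] of the convex map [x |-> (expR x - 1) * S], whose
   derivative there is [S]. *)
Lemma expR_sub1_slope_eq (R : realType) (a S : R) : 0 <= S ->
  (forall x, x * a <= (expR x - 1) * S) -> a = S.
Proof.
rewrite le0r => /predU1P[->|S_gt0] slope.
  by have := slope 1; have := slope (-1); rewrite !mulr0; lra.
have a_gt0 : 0 < a.
  have := slope (-1); have : expR (-1) < 1 :> R by rewrite expR_lt1 ltrN10.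
  by nra.
have := slope (ln (a / S)); rewrite lnK ?posrE ?divr_gt0 // mulrBl divfK ?gt_eqF // mul1r.
set u := ln (a / S) => ineq.
have a_eq : a = S * expR u by rewrite lnK ?posrE ?divr_gt0 // mulrC divfK ?gt_eqF.
suff u0 : u = 0 by rewrite a_eq u0 expR0 mulr1.
have expRN_le : expR (- u) <= 1 - u.
  have EE : expR u * expR (- u) = 1 by rewrite -expRD subrr expR0.
  have := ler_wpM2r (ltW (expR_gt0 (- u))) ineq; rewrite a_eq mulrBl -!mulrA EE !mulr1.
  move=> h; have : S * (expR (- u) - 1 + u) <= 0 by nra.
  by rewrite pmulr_rle0 //; lra.
have := expR_ge1Dx (- u) => expRN_ge.
by apply/eqP; rewrite -oppr_eq0; apply/eqP/expR_eq1Dx; lra.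
Qed.

Definition gibbs (R : realType) (n m : nat) (eps : R) (D : 'M[R]_(n, m))
    (f : 'I_n -> R) (g : 'I_m -> R) : 'M[R]_(n, m) :=
  \matrix_(k, l) expR ((f k + g l - D k l) / eps - 1).

Lemma gibbs_gt0 (R : realType) (n m : nat) (eps : R) D f g k l :
  0 < @gibbs R n m eps D f g k l.
Proof. by rewrite mxE expR_gt0. Qed.

Lemma ent_objE (R : realType) (n m : nat) (eps : R) (D Q : 'M[R]_(n, m)) :
  ent_obj eps D Q = \sum_(k < n) \sum_(l < m) (Q k l * D k l + eps * (Q k l * ln (Q k l))).
Proof.
rewrite /ent_obj mulr_sumr -big_split; apply: eq_bigr => k _ /=.
by rewrite mulr_sumr -big_split.
Qed.

Section EntropicDuality.
Variables (R : realType) (n m : nat) (eps : R) (a : 'I_n -> R) (b : 'I_m -> R).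
Hypothesis eps_gt0 : 0 < eps.

Lemma ent_obj_sub_dual_obj (D Q : 'M[R]_(n, m)) f g :
  (forall k, \sum_(l < m) Q k l = a k) -> (forall l, \sum_(k < n) Q k l = b l) ->
  ent_obj eps D Q - dual_obj eps a b D f g =
  eps * \sum_(k < n) \sum_(l < m) fenchel_gap (Q k l) ((f k + g l - D k l) / eps).
Proof.
move=> Q_row Q_col; rewrite /dual_obj.
have -> : \sum_(k < n) f k * a k = \sum_(k < n) \sum_(l < m) f k * Q k l.
  by apply: eq_bigr => k _; rewrite -Q_row mulr_sumr.
have -> : \sum_(l < m) g l * b l = \sum_(k < n) \sum_(l < m) g l * Q k l.
  by rewrite exchange_big; apply: eq_bigr => l _; rewrite -Q_col mulr_sumr.
rewrite /ent_obj /fenchel_gap !mulr_sumr opprB opprD !addrA -!sumrN -!big_split /=.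
apply: eq_bigr => k _; rewrite !mulr_sumr -!sumrN -!big_split /=.
by apply: eq_bigr => l _; field; rewrite gt_eqF.
Qed.

Lemma dual_obj_le_ent_obj (D Q : 'M[R]_(n, m)) f g :
  coupling a b Q -> dual_obj eps a b D f g <= ent_obj eps D Q.
Proof.
move=> [Q_ge0 Q_row Q_col]; rewrite -subr_ge0 (ent_obj_sub_dual_obj _ _ _ Q_row Q_col).
rewrite mulr_ge0 ?(ltW eps_gt0) //.
by do 2![apply: sumr_ge0 => ? _]; exact: fenchel_gap_ge0.
Qed.

Lemma ent_obj_gibbs (D : 'M[R]_(n, m)) f g :
  coupling a b (gibbs eps D f g) -> ent_obj eps D (gibbs eps D f g) = dual_obj eps a b D f g.
Proof.
move=> [_ G_row G_col]; apply/eqP; rewrite -subr_eq0 (ent_obj_sub_dual_obj _ _ _ G_row G_col).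
by rewrite big1 ?mulr0 // => k _; rewrite big1 // => l _; rewrite mxE fenchel_gap_expR.
Qed.

Lemma dW_le_ent_obj (D Q : 'M[R]_(n, m)) :
  coupling a b Q -> dW eps a b D <= ent_obj eps D Q.
Proof.
move=> cQ; apply: ge_inf; last by exists Q.
exists (dual_obj eps a b D (fun=> 0) (fun=> 0)) => _ [P cP <-].
exact: dual_obj_le_ent_obj.
Qed.

Lemma dual_obj_le_dW (D Q : 'M[R]_(n, m)) f g :
  coupling a b Q -> dual_obj eps a b D f g <= dW eps a b D.
Proof.
move=> cQ; apply: lb_le_inf; first by exists (ent_obj eps D Q); exists Q.
by move=> _ [P cP <-]; exact: dual_obj_le_ent_obj.
Qed.

Lemma dW_gibbs (D : 'M[R]_(n, m)) f g :
  coupling a b (gibbs eps D f g) -> dW eps a b D = ent_obj eps D (gibbs eps D f g).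
Proof.
move=> cG; apply/eqP; rewrite eq_le dW_le_ent_obj //= ent_obj_gibbs //.
exact: dual_obj_le_dW cG.
Qed.

Lemma dW_lipschitz (D D' Q : 'M[R]_(n, m)) (c : R) :
  coupling a b Q -> \sum_(k < n) a k = 1 ->
  (forall k l, `|D k l - D' k l| <= c) -> `|dW eps a b D - dW eps a b D'| <= c.
Proof.
move=> cQ a_sum1.
suff dW_le (D1 D2 : 'M[R]_(n, m)) : (forall k l, `|D1 k l - D2 k l| <= c) ->
    dW eps a b D1 <= dW eps a b D2 + c.
  move=> Dc; have D'c k l : `|D' k l - D k l| <= c by rewrite distrC.
  by have := dW_le D D' Dc; have := dW_le D' D D'c; rewrite ler_norml; lra.
move=> Dc; rewrite -lerBlDr; apply: lb_le_inf; first by exists (ent_obj eps D2 Q); exists Q.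
move=> _ [P cP <-]; rewrite lerBlDr; apply: le_trans (dW_le_ent_obj D1 cP) _.
have -> : ent_obj eps D1 P =
    ent_obj eps D2 P + \sum_(k < n) \sum_(l < m) P k l * (D1 k l - D2 k l).
  rewrite /ent_obj addrAC; congr (_ + _); rewrite -big_split; apply: eq_bigr => k _ /=.
  by rewrite -big_split; apply: eq_bigr => l _ /=; ring.
case: cP => P_ge0 P_row _; rewrite lerD2l.
have -> : c = \sum_(k < n) \sum_(l < m) P k l * c.
  by rewrite -[LHS]mul1r -a_sum1 mulr_suml; apply: eq_bigr => k _; rewrite -P_row mulr_suml.
do 2![apply: ler_sum => ? _]; rewrite (le_trans (ler_norm _)) // normrM ger0_norm //.
exact: ler_wpM2l.
Qed.

Lemma dual_obj_gibbs (D : 'M[R]_(n, m)) f g :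
  dual_obj eps a b D f g = \sum_(k < n) f k * a k + \sum_(l < m) g l * b l
                           - eps * \sum_(k < n) \sum_(l < m) gibbs eps D f g k l.
Proof. by rewrite /dual_obj; congr (_ - eps * _); do 2!apply: eq_bigr => ? _; rewrite mxE. Qed.

Lemma dual_obj_shift_row (D : 'M[R]_(n, m)) f g k s :
  dual_obj eps a b D (fun k' => f k' + s * (k' == k)%:R) g =
  dual_obj eps a b D f g + s * a k
  - eps * ((expR (s / eps) - 1) * \sum_(l < m) gibbs eps D f g k l).
Proof.
have linear_part : \sum_(k' < n) (f k' + s * (k' == k)%:R) * a k' =
    \sum_(k' < n) f k' * a k' + s * a k.
  rewrite (eq_bigr (fun k' => f k' * a k' + s * ((k' == k)%:R * a k'))); last by move=> *; ring.
  rewrite big_split /=; congr (_ + _).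
  rewrite -mulr_sumr (bigD1 k) // eqxx mul1r big1 /= ?addr0 // => k' /negPf->.
  by rewrite mul0r.
have exp_part : \sum_(k' < n) \sum_(l < m)
      expR ((f k' + s * (k' == k)%:R + g l - D k' l) / eps - 1) =
    \sum_(k' < n) \sum_(l < m) gibbs eps D f g k' l
    + (expR (s / eps) - 1) * \sum_(l < m) gibbs eps D f g k l.
  rewrite (bigD1 k) // [X in _ = X + _](bigD1 k) // eqxx /= mulr1.
  have -> : \sum_(l < m) expR ((f k + s + g l - D k l) / eps - 1) =
      expR (s / eps) * \sum_(l < m) gibbs eps D f g k l.
    rewrite mulr_sumr; apply: eq_bigr => l _; rewrite mxE -expRD; congr expR.
    by field; rewrite gt_eqF.
  rewrite (eq_bigr (fun k' => \sum_(l < m) gibbs eps D f g k' l)) => [|k' /negPf->]; first ring.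
  by apply: eq_bigr => l _; rewrite mxE mulr0 addr0.
by rewrite [dual_obj _ _ _ _ f g]dual_obj_gibbs /dual_obj linear_part exp_part; ring.
Qed.

Lemma opt_dual_row_marginal (D : 'M[R]_(n, m)) f g :
  opt_dual eps a b D f g -> forall k, \sum_(l < m) gibbs eps D f g k l = a k.
Proof.
move=> fg_opt k; apply/esym/expR_sub1_slope_eq.
  by apply: sumr_ge0 => l _; exact/ltW/gibbs_gt0.
move=> x; have := fg_opt (fun k' => f k' + eps * x * (k' == k)%:R) g.
rewrite dual_obj_shift_row (mulrC eps x) mulfK ?gt_eqF // => opt.
by rewrite -(ler_pM2l eps_gt0); lra.
Qed.

End EntropicDuality.

Section Transposition.
Variables (R : realType) (n m : nat) (eps : R) (a : 'I_n -> R) (b : 'I_m -> R).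
Variable D : 'M[R]_(n, m).

Lemma dual_obj_tr f g : dual_obj eps b a D^T g f = dual_obj eps a b D f g.
Proof.
rewrite /dual_obj [X in X - _]addrC exchange_big; congr (_ - eps * _).
by do 2!apply: eq_bigr => ? _; rewrite mxE [g _ + f _]addrC.
Qed.

Lemma gibbs_tr f g : gibbs eps D^T g f = (gibbs eps D f g)^T.
Proof. by apply/matrixP => l k; rewrite !mxE [g l + f k]addrC. Qed.

Lemma opt_dual_tr f g : opt_dual eps a b D f g -> opt_dual eps b a D^T g f.
Proof. by move=> fg_opt f' g'; rewrite !dual_obj_tr; exact: fg_opt. Qed.

End Transposition.

Section PrimalDual.
Variables (R : realType) (n m : nat) (eps : R) (a : 'I_n -> R) (b : 'I_m -> R).
Variables (D : 'M[R]_(n, m)) (f : 'I_n -> R) (g : 'I_m -> R).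
Hypothesis eps_gt0 : 0 < eps.

Lemma opt_dual_gibbs_coupling : opt_dual eps a b D f g -> coupling a b (gibbs eps D f g).
Proof.
move=> fg_opt; split; first by move=> k l; exact/ltW/gibbs_gt0.
  exact: (opt_dual_row_marginal eps_gt0 fg_opt).
move=> l; rewrite -(opt_dual_row_marginal eps_gt0 (opt_dual_tr fg_opt)) gibbs_tr.
by apply: eq_bigr => k _; rewrite !mxE.
Qed.

Lemma opt_plan_gibbs (P : 'M[R]_(n, m)) :
  opt_plan eps a b D P -> opt_dual eps a b D f g -> P = gibbs eps D f g.
Proof.
move=> [cP P_opt] fg_opt; have cG := opt_dual_gibbs_coupling fg_opt.
have gap0 : ent_obj eps D P - dual_obj eps a b D f g = 0.
  apply/eqP; rewrite eq_le subr_ge0 dual_obj_le_ent_obj // andbT subr_le0.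
  by rewrite -(ent_obj_gibbs eps_gt0 cG); exact: P_opt.
case: cP gap0 => P_ge0 P_row P_col; rewrite ent_obj_sub_dual_obj //.
move=> /eqP; rewrite mulf_eq0 gt_eqF //= => /eqP gap_sum0.
have gap_ge0 k l : 0 <= fenchel_gap (P k l) ((f k + g l - D k l) / eps).
  exact: fenchel_gap_ge0.
have gap_row0 := psumr_eq0P (fun k _ => sumr_ge0 _ (fun l _ => gap_ge0 k l)) gap_sum0.
apply/matrixP => k l; rewrite mxE; apply: fenchel_gap_eq0 (P_ge0 k l) _.
exact: (psumr_eq0P (fun l _ => gap_ge0 k l) (gap_row0 k isT)).
Qed.

End PrimalDual.

Lemma filter_forall2 (T : Type) (I J : finType) (F : set_system T) {FF : Filter F}
    (P : I -> J -> T -> Prop) :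
  (forall i j, \forall t \near F, P i j t) -> \forall t \near F, forall i j, P i j t.
Proof. by move=> PF; exact: filter_forall FF (fun i => filter_forall FF (PF i)). Qed.

Lemma near0_mulr_lt (R : realFieldType) (h x : R) : 0 < x -> \forall t \near 0, `|t * h| < x.
Proof.
move=> x_gt0; have h1_gt0 : 0 < `|h| + 1 by rewrite ltr_wpDl.
near=> t; have : `|t| < x / (`|h| + 1) by near: t; apply: (@nbhs0_lt R R^o); exact: divr_gt0.
rewrite ltr_pdivlMr // normrM => t_lt; have := normr_ge0 t; have := normr_ge0 h; nra.
Unshelve. all: by end_near. Qed.

Lemma near0_uniform_bound (R : realFieldType) (I : finType) (phi : I -> R -> R) (w : R -> R) :
  (forall t, 0 <= w t) ->
  (forall i, exists K, \forall t \near 0, phi i t <= K * w t) ->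
  exists K, \forall t \near 0, forall i, phi i t <= K * w t.
Proof.
move=> w_ge0 /choice[K phi_le]; exists (\sum_i `|K i|).
apply: filterS (filter_forall _ phi_le) => t phi_le_t i.
apply: le_trans (phi_le_t i) _; rewrite ler_wpM2r // (le_trans (ler_norm _)) //.
by rewrite (bigD1 i) //= lerDl sumr_ge0.
Qed.

Lemma is_derive0_quadratic (R : realFieldType) (F : R -> R) (L K : R) :
  (\forall t \near 0, `|F t - F 0 - t * L| <= K * t ^+ 2) -> is_derive (0 : R) (1 : R) F L.
Proof.
move=> F_quad.
have F_cvg : (h^-1 *: ((F \o shift 0) (h *: 1) - F 0) @[h --> 0^'] --> L)%classic.
  apply/cvgrPdist_le => r r_gt0; have K1_gt0 : 0 < `|K| + 1 by rewrite ltr_wpDl.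
  near=> h.
  have h_neq0 : h != 0 by near: h; exact: nbhs_dnbhs_neq.
  have h_small : `|h| <= r / (`|K| + 1) by near: h; apply: (@dnbhs0_le R R^o); exact: divr_gt0.
  have Fh : `|F h - F 0 - h * L| <= K * h ^+ 2 by near: h; exact: cvg_within F_quad.
  rewrite /= addr0 [h *: 1]mulr1 -[h ^+ 2](real_normK (num_real h)) in Fh *.
  have -> : L - h^-1 * (F h - F 0) = - h^-1 * (F h - F 0 - h * L) by field.
  rewrite normrM normrN normrV ?unitfE // mulrC ler_pdivrMr ?normr_gt0 //.
  apply: le_trans Fh _; rewrite ler_pdivlMr // in h_small.
  have := ler_norm K; have := normr_ge0 h; nra.
apply: DeriveDef; first exact: cvgP F_cvg.
exact: cvg_lim F_cvg.
Unshelve. all: by end_near. Qed.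

Lemma ln_le_tangent (R : realType) (p q : R) : 0 < p -> 0 < q -> ln q <= ln p + (q - p) / p.
Proof.
move=> p_gt0 q_gt0; rewrite -lerBlDl -ln_div ?posrE //.
have -> : q / p = 1 + (q - p) / p by field; rewrite gt_eqF.
apply: le_ln1Dx; have : 0 < q / p by rewrite divr_gt0.
have -> : (q - p) / p = q / p - 1 by field; rewrite gt_eqF.
lra.
Qed.

Lemma sum2_quadratic (R : pzSemiRingType) (I J : finType) (A B C : I -> J -> R) (t : R) :
  \sum_i \sum_j (A i j + t * B i j + t ^+ 2 * C i j) =
  \sum_i \sum_j A i j + t * \sum_i \sum_j B i j + t ^+ 2 * \sum_i \sum_j C i j.
Proof.
rewrite !mulr_sumr -!big_split; apply: eq_bigr => i _ /=.
by rewrite !mulr_sumr -!big_split.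
Qed.

Lemma entropy_term_le (R : realType) (eps p x d v c t : R) :
  0 < eps -> 0 < p -> 0 < p + t * x -> c = d + eps * (ln p + 1) ->
  (p + t * x) * (d + t * v) + eps * ((p + t * x) * ln (p + t * x))
  <= p * d + eps * (p * ln p) + t * (p * v + x * c) + t ^+ 2 * (x * v + eps * (x ^+ 2 / p)).
Proof.
move=> eps_gt0 p_gt0 q_gt0 ->; have ln_le := ln_le_tangent p_gt0 q_gt0.
apply: (@le_trans _ _ ((p + t * x) * (d + t * v)
                       + eps * ((p + t * x) * (ln p + (p + t * x - p) / p)))).
  by rewrite lerD2l !ler_pM2l.
by rewrite le_eqVlt; apply/orP; left; apply/eqP; field; rewrite gt_eqF.
Qed.

Lemma gibbs_term_le (R : realType) (eps p v t : R) :
  0 < eps -> 0 <= p -> `|t * (v / eps)| <= 1 / 2 ->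
  eps * (p * expR (- (t * (v / eps))))
  <= eps * p + t * (- (p * v)) + t ^+ 2 * (2 / eps * (p * v ^+ 2)).
Proof.
move=> eps_gt0 p_ge0; rewrite -normrN => /expR_le1Dx_sqr exp_le.
apply: (@le_trans _ _ (eps * (p * (1 + - (t * (v / eps)) + 2 * (- (t * (v / eps))) ^+ 2)))).
  by rewrite ler_wpM2l ?(ltW eps_gt0) // ler_wpM2l.
by rewrite le_eqVlt; apply/orP; left; apply/eqP; field; rewrite gt_eqF.
Qed.

Section GibbsPerturbation.
Variables (R : realType) (n m : nat) (eps : R) (a al : 'I_n -> R) (b be : 'I_m -> R).
Variables (D V : 'M[R]_(n, m)) (f : 'I_n -> R) (g : 'I_m -> R).
Hypothesis eps_gt0 : 0 < eps.
Hypothesis gibbs_coupling : coupling a b (gibbs eps D f g).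
Hypotheses (a_sum1 : \sum_(k < n) a k = 1) (b_sum1 : \sum_(l < m) b l = 1).
Hypotheses (al_sum0 : \sum_(k < n) al k = 0) (be_sum0 : \sum_(l < m) be l = 0).

Let P0 := gibbs eps D f g.
Let X k l := al k * b l + a k * be l.
Let Q t : 'M[R]_(n, m) := \matrix_(k, l) (P0 k l + t * X k l).
Let a_t t k := a k + t * al k.
Let b_t t l := b l + t * be l.
Let L := \sum_(k < n) \sum_(l < m) P0 k l * V k l
         + \sum_(k < n) f k * al k + \sum_(l < m) g l * be l.

Lemma coupling_perturb t : (forall k l, 0 <= P0 k l + t * X k l) ->
  coupling (a_t t) (b_t t) (Q t).
Proof.
case: gibbs_coupling => _ P0_row P0_col Q_ge0; split => [k l|k|l]; first by rewrite mxE.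
- under eq_bigr do rewrite mxE.
  rewrite big_split /= P0_row -mulr_sumr big_split /= -!mulr_sumr.
  by rewrite b_sum1 be_sum0 mulr1 mulr0 addr0.
- under eq_bigr do rewrite mxE.
  rewrite big_split /= P0_col -mulr_sumr big_split /= -!mulr_suml.
  by rewrite a_sum1 al_sum0 mul1r mul0r add0r.
Qed.

Lemma tangent_pairing :
  \sum_(k < n) \sum_(l < m) X k l * (f k + g l) =
  \sum_(k < n) f k * al k + \sum_(l < m) g l * be l.
Proof.
have -> : \sum_(k < n) \sum_(l < m) X k l * (f k + g l) =
    \sum_(k < n) \sum_(l < m) (f k * al k) * b l + \sum_(k < n) \sum_(l < m) al k * (b l * g l)
    + \sum_(k < n) \sum_(l < m) (a k * f k) * be l + \sum_(k < n) \sum_(l < m) a k * (g l * be l).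
  rewrite -!big_split; apply: eq_bigr => k _; rewrite -!big_split /=.
  by apply: eq_bigr => l _; rewrite /X; ring.
rewrite -!big_distrlr /= b_sum1 be_sum0 al_sum0 a_sum1.
by rewrite mulr1 mulr0 !mul0r mul1r !addr0.
Qed.

Lemma dW_perturb_le t : (forall k l, 0 < P0 k l + t * X k l) ->
  dW eps (a_t t) (b_t t) (D + t *: V) <= ent_obj eps D P0 + t * L
    + t ^+ 2 * \sum_(k < n) \sum_(l < m) (X k l * V k l + eps * (X k l ^+ 2 / P0 k l)).
Proof.
move=> Q_gt0; have cQ := coupling_perturb (fun k l => ltW (Q_gt0 k l)).
apply: le_trans (dW_le_ent_obj eps_gt0 (D + t *: V) cQ) _.
have -> : L = \sum_(k < n) \sum_(l < m) (P0 k l * V k l + X k l * (f k + g l)).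
  by rewrite /L -addrA -tangent_pairing -big_split; apply: eq_bigr => k _; rewrite -big_split.
rewrite !ent_objE -sum2_quadratic; do 2!apply: ler_sum => ? _.
rewrite [Q t _ _]mxE [(D + _) _ _]mxE [(t *: V) _ _]mxE.
apply: entropy_term_le => //; first exact: gibbs_gt0.
by rewrite /P0 mxE expRK; field; rewrite gt_eqF.
Qed.

Lemma dW_perturb_ge t : (forall k l, 0 <= P0 k l + t * X k l) ->
  (forall k l, `|t * (V k l / eps)| <= 1 / 2) ->
  ent_obj eps D P0 + t * L
    - t ^+ 2 * \sum_(k < n) \sum_(l < m) (2 / eps * (P0 k l * V k l ^+ 2))
  <= dW eps (a_t t) (b_t t) (D + t *: V).
Proof.
move=> Q_ge0 V_small; apply: le_trans (dual_obj_le_dW eps_gt0 _ f g (coupling_perturb Q_ge0)).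
rewrite (ent_obj_gibbs eps_gt0 gibbs_coupling) !dual_obj_gibbs.
have sum_lin (I : finType) (c u w : I -> R) :
    \sum_i c i * (u i + t * w i) = \sum_i c i * u i + t * \sum_i c i * w i.
  by rewrite mulr_sumr -big_split; apply: eq_bigr => i _; rewrite mulrDr mulrCA.
rewrite !sum_lin.
have exp_le : eps * \sum_(k < n) \sum_(l < m) gibbs eps (D + t *: V) f g k l
    <= eps * \sum_(k < n) \sum_(l < m) P0 k l
       + t * \sum_(k < n) \sum_(l < m) - (P0 k l * V k l)
       + t ^+ 2 * \sum_(k < n) \sum_(l < m) (2 / eps * (P0 k l * V k l ^+ 2)).
  have scale (F : 'I_n -> 'I_m -> R) :
      eps * \sum_(k < n) \sum_(l < m) F k l = \sum_(k < n) \sum_(l < m) eps * F k l.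
    by rewrite mulr_sumr; apply: eq_bigr => k _; rewrite mulr_sumr.
  rewrite !scale -sum2_quadratic; apply: ler_sum => k _; apply: ler_sum => l _.
  rewrite (_ : gibbs _ _ _ _ k l = P0 k l * expR (- (t * (V k l / eps)))).
    by apply: gibbs_term_le => //; exact/ltW/gibbs_gt0.
  by rewrite !mxE -expRD; congr expR; field; rewrite gt_eqF.
have sumN : \sum_(k < n) \sum_(l < m) - (P0 k l * V k l) =
    - \sum_(k < n) \sum_(l < m) P0 k l * V k l.
  by rewrite -sumrN; apply: eq_bigr => k _; rewrite sumrN.
by move: exp_le; rewrite /L sumN; lra.
Qed.

Lemma dW_perturb_expansion : exists K, \forall t \near 0,
  `|dW eps (a_t t) (b_t t) (D + t *: V) - ent_obj eps D P0 - t * L| <= K * t ^+ 2.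
Proof.
pose K1 := \sum_(k < n) \sum_(l < m) (X k l * V k l + eps * (X k l ^+ 2 / P0 k l)).
pose K2 := \sum_(k < n) \sum_(l < m) (2 / eps * (P0 k l * V k l ^+ 2)).
have K2_ge0 : 0 <= K2.
  do 2![apply: sumr_ge0 => ? _]; rewrite mulr_ge0 ?divr_ge0 ?(ltW eps_gt0) //.
  by rewrite mulr_ge0 ?sqr_ge0 // ltW ?gibbs_gt0.
exists (`|K1| + K2); near=> t.
have Q_gt0 : forall k l, 0 < P0 k l + t * X k l.
  near: t; apply: filter_forall2 => k l.
  apply: filterS (near0_mulr_lt (X k l) (gibbs_gt0 eps D f g k l)) => t.
  by rewrite ltr_norml => /andP[? _]; lra.
have V_small : forall k l, `|t * (V k l / eps)| <= 1 / 2.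
  near: t; apply: filter_forall2 => k l.
  by apply: filterS (near0_mulr_lt (V k l / eps) (_ : 0 < 1 / 2)) => [t /ltW|].
have := dW_perturb_le Q_gt0; have := dW_perturb_ge (fun k l => ltW (Q_gt0 k l)) V_small.
have : t ^+ 2 * K1 <= t ^+ 2 * `|K1| by rewrite ler_wpM2l ?sqr_ge0 ?ler_norm.
have : 0 <= t ^+ 2 * `|K1| by rewrite mulr_ge0 ?sqr_ge0.
have : 0 <= t ^+ 2 * K2 by rewrite mulr_ge0 ?sqr_ge0.
rewrite -/K1 -/K2 ler_norml (_ : (`|K1| + K2) * t ^+ 2 = t ^+ 2 * `|K1| + t ^+ 2 * K2).
  by lra.
by ring.
Unshelve. all: by end_near. Qed.

End GibbsPerturbation.

Lemma row_stochastic_perturb (R : realType) (n : nat) (M H : 'M[R]_n) :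
  row_stochastic M -> (forall k k', 0 < M k k') -> (forall k, \sum_(k' < n) H k k' = 0) ->
  \forall t \near 0, row_stochastic (M + t *: H).
Proof.
move=> [_ M_row] M_gt0 H_row0.
have H_small k k' : \forall t \near 0, `|t * H k k'| < M k k' by exact: near0_mulr_lt.
apply: filterS (filter_forall2 H_small) => t {}H_small; split => [k k'|k].
  by rewrite !mxE; have := H_small k k'; rewrite ltr_norml => /andP[? _]; lra.
under eq_bigr do rewrite !mxE.
by rewrite big_split /= M_row -mulr_sumr H_row0 mulr0 addr0.
Qed.

Lemma coupling_product (R : realType) (n m : nat) (a : 'I_n -> R) (b : 'I_m -> R) :
  (forall k, 0 <= a k) -> (forall l, 0 <= b l) ->
  \sum_(k < n) a k = 1 -> \sum_(l < m) b l = 1 ->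
  coupling a b (\matrix_(k, l) (a k * b l)).
Proof.
move=> a_ge0 b_ge0 a_sum1 b_sum1; split => [k l|k|l]; rewrite ?mxE ?mulr_ge0 //.
  by under eq_bigr do rewrite mxE; rewrite -mulr_sumr b_sum1 mulr1.
by under eq_bigr do rewrite mxE; rewrite -mulr_suml a_sum1 mul1r.
Qed.

Lemma fixed_point_stable (R : realType) (n m : nat) (eps delta r : R)
    (C M N : 'M[R]_(n, m)) (mX : 'M[R]_n) (mY : 'M[R]_m) :
  0 < eps -> 0 < delta <= 1 -> row_stochastic mX -> row_stochastic mY ->
  fixed_point eps delta C mX mY M ->
  (forall i j, `|N i j - (delta * C i j
       + (1 - delta) * dW eps (fun k => mX i k) (fun l => mY j l) N)| <= r) ->
  forall i j, `|M i j - N i j| <= r / delta.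
Proof.
move=> eps_gt0 /andP[delta_gt0 delta_le1] [mX_ge0 mX_row] [mY_ge0 mY_row] M_fp N_approx i0 j0.
pose c := \big[Order.max/0]_(p : 'I_n * 'I_m) `|M p.1 p.2 - N p.1 p.2|.
have c_ge i j : `|M i j - N i j| <= c.
  exact: (le_bigmax 0 (fun p => `|M p.1 p.2 - N p.1 p.2|) (i, j)).
have entry_le i j : `|M i j - N i j| <= (1 - delta) * c + r.
  have cpl := coupling_product (mX_ge0 i) (mY_ge0 j) (mX_row i) (mY_row j).
  have lip := dW_lipschitz eps_gt0 cpl (mX_row i) c_ge.
  rewrite {1}M_fp; set W := dW _ _ _ M; pose W' := dW eps (fun k => mX i k) (fun l => mY j l) N.
  have -> : delta * C i j + (1 - delta) * W - N i j =
      (1 - delta) * (W - W') - (N i j - (delta * C i j + (1 - delta) * W')) by ring.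
  apply: le_trans (ler_normB _ _) _; rewrite normrM ger0_norm ?subr_ge0 //.
  by rewrite lerD ?ler_wpM2l ?subr_ge0.
have r_ge0 : 0 <= r := le_trans (normr_ge0 _) (N_approx i0 j0).
have c_le : c <= (1 - delta) * c + r.
  apply: bigmax_le => [|p _]; last exact: entry_le.
  by rewrite addr_ge0 // mulr_ge0 ?subr_ge0 // (le_trans _ (c_ge i0 j0)).
apply: le_trans (c_ge i0 j0) _; rewrite ler_pdivlMr //; nra.
Qed.

Lemma mxvec_index_eq (n m : nat) (i k : 'I_n) (j l : 'I_m) :
  (mxvec_index i j == mxvec_index k l) = ((i, j) == (k, l)).
Proof. by apply/eqP/eqP => [/cast_ord_inj/enum_rank_inj|[-> ->]]. Qed.

Lemma sum_mxvec_index (V : nmodType) (n m : nat) (F : 'I_(n * m) -> V) :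
  \sum_(r < n * m) F r = \sum_(i < n) \sum_(j < m) F (mxvec_index i j).
Proof. by rewrite (reindex _ (curry_mxvec_bij _ _)) pair_bigA; apply: eq_bigr => -[]. Qed.

Lemma sum_mxvec_index_eq (R : pzSemiRingType) (n m : nat) (F : 'I_n -> 'I_m -> R) i j :
  \sum_(k < n) \sum_(l < m) F k l * (mxvec_index i j == mxvec_index k l)%:R = F i j.
Proof.
rewrite pair_bigA (bigD1 (i, j)) //= mxvec_index_eq eqxx mulr1 big1 ?addr0 // => -[k l] /=.
by rewrite mxvec_index_eq eq_sym => /negPf->; rewrite mulr0.
Qed.

Lemma flat4E (R : realType) (n1 n2 n3 n4 : nat) (T : 'I_n1 -> 'I_n2 -> 'I_n3 -> 'I_n4 -> R)
    i j k l :
  flat4 T (mxvec_index i j) (mxvec_index k l) = T i j k l.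
Proof.
rewrite /flat4 summxE (eq_bigr (fun i' => \sum_j' (\sum_k' \sum_l' T i' j' k' l'
    * (mxvec_index k l == mxvec_index k' l')%:R) * (mxvec_index i j == mxvec_index i' j')%:R)).
  by rewrite !sum_mxvec_index_eq.
move=> i' _; rewrite summxE; apply: eq_bigr => j' _; rewrite summxE mulr_suml.
apply: eq_bigr => k' _; rewrite summxE mulr_suml; apply: eq_bigr => l' _.
by rewrite !mxE -mulnb natrM mulrA mulrAC.
Qed.

Lemma mulmx_flat4E (R : realType) (n1 n2 n3 n4 p : nat)
    (T : 'I_n1 -> 'I_n2 -> 'I_n3 -> 'I_n4 -> R) (B : 'M[R]_(n3 * n4, p)) i j c :
  (flat4 T *m B) (mxvec_index i j) c
  = \sum_(k < n3) \sum_(l < n4) T i j k l * B (mxvec_index k l) c.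
Proof. by rewrite mxE sum_mxvec_index; do 2!apply: eq_bigr => ? _; rewrite flat4E. Qed.

Lemma mulmx_mxvec_trE (R : pzSemiRingType) (q n m : nat) (M : 'M[R]_(q, n * m))
    (H : 'M[R]_(n, m)) r :
  (M *m (mxvec H)^T) r 0 = \sum_(k < n) \sum_(l < m) M r (mxvec_index k l) * H k l.
Proof. by rewrite mxE sum_mxvec_index; do 2!apply: eq_bigr => ? _; rewrite mxE mxvecE. Qed.

Lemma sum_indicator_row (R : pzSemiRingType) (n p : nat) (i : 'I_n) (c : 'I_p -> R)
    (H : 'I_n -> 'I_p -> R) :
  \sum_(k < n) \sum_(k' < p) c k' * (i == k)%:R * H k k' = \sum_(k' < p) c k' * H i k'.
Proof.
rewrite (bigD1 i) //= [X in _ + X]big1 => [|k /negPf ne]; last first.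
  by apply: big1 => k' _; rewrite eq_sym ne mulr0 mul0r.
by rewrite addr0; apply: eq_bigr => k' _; rewrite eqxx mulr1.
Qed.

Lemma stochastic_fixed_vector_eq0 (R : realFieldType) (N : nat) (S : 'M[R]_N) (s : R)
    (u : 'I_N -> R) :
  0 <= s < 1 -> (forall r c, 0 <= S r c) -> (forall r, \sum_c S r c = 1) ->
  (forall r, u r = s * \sum_c S r c * u c) -> forall r, u r = 0.
Proof.
move=> /andP[s_ge0 s_lt1] S_ge0 S_row u_eq r0.
pose mu := \big[Order.max/0]_c `|u c|.
have mu_ge c : `|u c| <= mu by exact: (le_bigmax 0 (fun c => `|u c|) c).
have u_le r : `|u r| <= s * mu.
  rewrite u_eq normrM ger0_norm // ler_wpM2l //.
  apply: le_trans (ler_norm_sum _ _ _) _.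
  rewrite -[mu]mul1r -(S_row r) mulr_suml; apply: ler_sum => c _.
  by rewrite normrM ger0_norm // ler_wpM2l.
have mu_ge0 : 0 <= mu := le_trans (normr_ge0 _) (mu_ge r0).
have mu_le : mu <= s * mu by apply: bigmax_le => [|c _]; [exact: mulr_ge0 | exact: u_le].
have mu0 : mu = 0 by nra.
by apply/eqP; rewrite -normr_eq0 eq_le normr_ge0 andbT -mu0.
Qed.

Lemma unitmx_1_sub_stochastic (R : realFieldType) (N : nat) (S : 'M[R]_N) (s : R) :
  0 <= s < 1 -> (forall r c, 0 <= S r c) -> (forall r, \sum_c S r c = 1) ->
  1%:M - s *: S \in unitmx.
Proof.
move=> s_01 S_ge0 S_row; rewrite -unitmx_tr -row_free_unit; apply: inj_row_free => v.
rewrite linearB /= trmx1 linearZ /= mulmxBr mulmx1 -scalemxAr => /eqP.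
rewrite subr_eq0 => /eqP v_eq; apply/rowP => r; rewrite mxE.
apply: (stochastic_fixed_vector_eq0 s_01 S_ge0 S_row) => {}r.
by rewrite {1}v_eq !mxE; congr (_ * _); apply: eq_bigr => c _; rewrite mxE mulrC.
Qed.

Section FixedPointDerivative.
Variables (R : realType) (n m : nat) (eps delta : R).
Variables (C : 'M[R]_(n, m)) (mX : 'M[R]_n) (mY : 'M[R]_m).
Variable Cinf : 'M[R]_(n, m) -> 'M[R]_n -> 'M[R]_m -> 'M[R]_(n, m).
Variable P : 'I_n -> 'I_m -> 'M[R]_(n, m).
Variables (f : 'I_n -> 'I_m -> 'I_n -> R) (g : 'I_n -> 'I_m -> 'I_m -> R).
Hypotheses (eps_gt0 : 0 < eps) (delta_01 : 0 < delta <= 1).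
Hypotheses (mX_rs : row_stochastic mX) (mY_rs : row_stochastic mY).
Hypothesis Cinf_fixed : forall C' mX' mY', row_stochastic mX' -> row_stochastic mY' ->
  fixed_point eps delta C' mX' mY' (Cinf C' mX' mY').
Hypothesis P_opt : forall i j,
  opt_plan eps (fun k => mX i k) (fun l => mY j l) (Cinf C mX mY) (P i j).
Hypothesis fg_opt : forall i j,
  opt_dual eps (fun k => mX i k) (fun l => mY j l) (Cinf C mX mY) (f i j) (g i j).

Let M0 := Cinf C mX mY.

Let P_gibbs i j : P i j = gibbs eps M0 (f i j) (g i j).
Proof. exact: (opt_plan_gibbs eps_gt0 (P_opt i j) (fg_opt i j)). Qed.

Let gibbs_coupling i j :
  coupling (fun k => mX i k) (fun l => mY j l) (gibbs eps M0 (f i j) (g i j)).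
Proof. by rewrite -P_gibbs; case: (P_opt i j). Qed.

(* [Cinf] is only known to solve the fixed-point equation for row-stochastic
   transitions; perturbations of [mX] and [mY] stay row-stochastic because the
   Gibbs plans, hence their marginals, are positive. *)
Let mX_gt0 (j0 : 'I_m) k k' : 0 < mX k k'.
Proof.
case: (gibbs_coupling k j0) => G_ge0 G_row _; rewrite -G_row (bigD1 j0) //=.
by apply: ltr_pwDl; [exact: gibbs_gt0 | apply: sumr_ge0 => l _; exact: G_ge0].
Qed.

Let mY_gt0 (i0 : 'I_n) l l' : 0 < mY l l'.
Proof.
case: (gibbs_coupling i0 l) => G_ge0 _ G_col; rewrite -G_col (bigD1 i0) //=.
by apply: ltr_pwDl; [exact: gibbs_gt0 | apply: sumr_ge0 => k _; exact: G_ge0].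
Qed.

Section Linearization.
Variables (E : 'M[R]_(n, m)) (HX : 'M[R]_n) (HY : 'M[R]_m) (v : 'M[R]_(n, m)).
Hypotheses (HX_row0 : forall k, \sum_(k' < n) HX k k' = 0).
Hypotheses (HY_row0 : forall l, \sum_(l' < m) HY l l' = 0).
Hypothesis v_eq : forall i j, v i j = delta * E i j + (1 - delta) *
  (\sum_(k < n) \sum_(l < m) P i j k l * v k l
   + \sum_(k < n) f i j k * HX i k + \sum_(l < m) g i j l * HY j l).

Let residual t i j := (M0 + t *: v) i j - (delta * (C + t *: E) i j + (1 - delta)
  * dW eps (fun k => (mX + t *: HX) i k) (fun l => (mY + t *: HY) j l) (M0 + t *: v)).

Lemma linearization_approx_fixed :
  exists K, \forall t \near 0, forall i j, `|residual t i j| <= K * t ^+ 2.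
Proof.
case: (mX_rs) (mY_rs) (delta_01) => _ mX_row [_ mY_row] /andP[_ delta_le1].
have M0_eq i j : M0 i j = delta * C i j + (1 - delta) * ent_obj eps M0 (P i j).
  by rewrite {1}(Cinf_fixed C mX_rs mY_rs i j) (dW_gibbs eps_gt0 (gibbs_coupling i j)) P_gibbs.
pose L i j := \sum_(k < n) \sum_(l < m) P i j k l * v k l
              + \sum_(k < n) f i j k * HX i k + \sum_(l < m) g i j l * HY j l.
have [K expand] : exists K, \forall t \near 0, forall p : 'I_n * 'I_m,
    `|dW eps (fun k => mX p.1 k + t * HX p.1 k) (fun l => mY p.2 l + t * HY p.2 l)
         (M0 + t *: v) - ent_obj eps M0 (P p.1 p.2) - t * L p.1 p.2| <= K * t ^+ 2.
  apply: near0_uniform_bound => [t|[i j]]; first exact: sqr_ge0.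
  rewrite /L P_gibbs.
  exact: (dW_perturb_expansion v eps_gt0 (gibbs_coupling i j) (mX_row i) (mY_row j)
                               (HX_row0 i) (HY_row0 j)).
exists ((1 - delta) * K); apply: filterS expand => t expand_t i j; rewrite /residual.
have row_shift (p : nat) (A H : 'M[R]_p) k :
    (fun k' => (A + t *: H) k k') = (fun k' => A k k' + t * H k k').
  by apply/funext => k'; rewrite !mxE.
rewrite !row_shift [(M0 + _) i j]mxE [(t *: v) i j]mxE [(C + _) i j]mxE [(t *: E) i j]mxE.
rewrite M0_eq v_eq -/(L i j); set W := dW _ _ _ _.
have -> : delta * C i j + (1 - delta) * ent_obj eps M0 (P i j)
    + t * (delta * E i j + (1 - delta) * L i j)
    - (delta * (C i j + t * E i j) + (1 - delta) * W)
    = (1 - delta) * - (W - ent_obj eps M0 (P i j) - t * L i j) by ring.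
rewrite normrM normrN ger0_norm ?subr_ge0 // -mulrA ler_wpM2l ?subr_ge0 //.
exact: (expand_t (i, j)).
Qed.

Lemma Cinf_is_derive i j : is_derive (0 : R) (1 : R)
  (fun t => Cinf (C + t *: E) (mX + t *: HX) (mY + t *: HY) i j) (v i j).
Proof.
have [K approx] := linearization_approx_fixed.
apply: (@is_derive0_quadratic _ _ _ (K / delta)); near=> t.
have mXt_rs : row_stochastic (mX + t *: HX).
  by near: t; exact: row_stochastic_perturb mX_rs (mX_gt0 j) HX_row0.
have mYt_rs : row_stochastic (mY + t *: HY).
  by near: t; exact: row_stochastic_perturb mY_rs (mY_gt0 i) HY_row0.
have approx_t : forall i j, `|residual t i j| <= K * t ^+ 2 by near: t; exact: approx.
have := fixed_point_stable eps_gt0 delta_01 mXt_rs mYt_rs (Cinf_fixed _ mXt_rs mYt_rs)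
  approx_t i j.
rewrite !scale0r !addr0 -/M0 [(M0 + _) _ _]mxE [(t *: v) _ _]mxE opprD addrA.
by rewrite mulrAC.
Unshelve. all: by end_near. Qed.

End Linearization.

Let A := 1%:M - (1 - delta) *: flat4 (fun i j k l => P i j k l).
Let Fm := flat4 (fun i j (k k' : 'I_n) => f i j k' * (i == k)%:R).
Let Gm := flat4 (fun i j (l l' : 'I_m) => g i j l' * (j == l)%:R).

Lemma unitmx_A : A \in unitmx.
Proof.
case/andP: delta_01 => delta_gt0 delta_le1; case: mX_rs => _ mX_row.
apply: unitmx_1_sub_stochastic => [|r c|r]; first by apply/andP; split; lra.
  case/mxvec_indexP: r => i j; case/mxvec_indexP: c => k l; rewrite flat4E.
  by case: (P_opt i j) => -[P_ge0 _ _] _.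
case/mxvec_indexP: r => i j; rewrite sum_mxvec_index -(mX_row i).
apply: eq_bigr => k _; case: (P_opt i j) => -[_ P_row _] _; rewrite -P_row.
by apply: eq_bigr => l _; rewrite flat4E.
Qed.

Lemma Cinf_gradient (E : 'M[R]_(n, m)) (HX : 'M[R]_n) (HY : 'M[R]_m) :
  (forall k, \sum_(k' < n) HX k k' = 0) -> (forall l, \sum_(l' < m) HY l l' = 0) ->
  forall i j, is_derive (0 : R) (1 : R)
    (fun t => Cinf (C + t *: E) (mX + t *: HX) (mY + t *: HY) i j)
    ((invmx A *m (delta *: (mxvec E)^T
       + (1 - delta) *: (Fm *m (mxvec HX)^T + Gm *m (mxvec HY)^T))) (mxvec_index i j) 0).
Proof.
move=> HX_row0 HY_row0 i j.
set w := _ + _; set u := invmx A *m w.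
have u_eq : u = w + (1 - delta) *: (flat4 (fun i j k l => P i j k l) *m u).
  have : A *m u = w by rewrite /u mulmxA mulmxV ?mul1mx // unitmx_A.
  by rewrite /A mulmxBl mul1mx -scalemxAl => <-; rewrite subrK.
have w_entry i' j' : w (mxvec_index i' j') 0 = delta * E i' j'
    + (1 - delta) * (\sum_(k < n) f i' j' k * HX i' k + \sum_(l < m) g i' j' l * HY j' l).
  rewrite /w mxE [(_ *: (mxvec E)^T) _ _]mxE [(_ *: (_ : 'cV[R]_(n * m))) _ _]mxE.
  rewrite [(_ + _ : 'cV[R]_(n * m)) _ _]mxE.
  rewrite !mulmx_mxvec_trE mxE mxvecE -!sum_indicator_row.
  by congr (_ + _ * (_ + _)); do 2!apply: eq_bigr => ? _; rewrite flat4E.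
have := Cinf_is_derive (v := \matrix_(k, l) u (mxvec_index k l) 0) HX_row0 HY_row0 _ i j.
rewrite mxE; apply => i' j'; rewrite mxE {1}u_eq.
rewrite [(w + _) _ _]mxE [(_ *: (flat4 _ *m u)) _ _]mxE mulmx_flat4E w_entry.
under [X in _ = _ + _ * (X + _ + _)]eq_bigr do under eq_bigr do rewrite mxE.
ring.
Qed.

Let zero_row_sum (p : nat) (k : 'I_p) : \sum_(k' < p) (0 : 'M[R]_p) k k' = 0.
Proof. by rewrite big1 // => k' _; rewrite mxE. Qed.

Lemma Cinf_derive_C i j k l :
  is_derive (0 : R) (1 : R) (fun t => Cinf (C + t *: delta_mx k l) mX mY i j)
    (delta * invmx A (mxvec_index i j) (mxvec_index k l)).
Proof.
have := Cinf_gradient (delta_mx k l) (zero_row_sum (p := n)) (zero_row_sum (p := m)) i j.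
rewrite !linear0 addr0 scaler0 addr0 -scalemxAr mxE mxvec_delta trmx_delta.
rewrite -colE mxE; suff -> : (fun t => Cinf (C + t *: delta_mx k l) mX mY i j) =
    (fun t => Cinf (C + t *: delta_mx k l) (mX + t *: 0) (mY + t *: 0) i j) by [].
by apply/funext => t; rewrite !scaler0 !addr0.
Qed.

Lemma Cinf_derive_mX (H : 'M[R]_n) :
  (forall k, \sum_(k' < n) H k k' = 0) -> forall i j,
  is_derive (0 : R) (1 : R) (fun t => Cinf C (mX + t *: H) mY i j)
    (((1 - delta) *: (invmx A *m Fm) *m (mxvec H)^T) (mxvec_index i j) 0).
Proof.
move=> H_row0 i j; have := Cinf_gradient 0 H_row0 (zero_row_sum (p := m)) i j.
rewrite !linear0 add0r addr0 -scalemxAr mulmxA -scalemxAl.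
suff -> : (fun t => Cinf C (mX + t *: H) mY i j) =
    (fun t => Cinf (C + t *: 0) (mX + t *: H) (mY + t *: 0) i j) by [].
by apply/funext => t; rewrite !scaler0 !addr0.
Qed.

Lemma Cinf_derive_mY (H : 'M[R]_m) :
  (forall l, \sum_(l' < m) H l l' = 0) -> forall i j,
  is_derive (0 : R) (1 : R) (fun t => Cinf C mX (mY + t *: H) i j)
    (((1 - delta) *: (invmx A *m Gm) *m (mxvec H)^T) (mxvec_index i j) 0).
Proof.
move=> H_row0 i j; have := Cinf_gradient 0 (zero_row_sum (p := n)) H_row0 i j.
rewrite !linear0 !add0r -scalemxAr mulmxA -scalemxAl.
suff -> : (fun t => Cinf C mX (mY + t *: H) i j) =
    (fun t => Cinf (C + t *: 0) (mX + t *: 0) (mY + t *: H) i j) by [].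
by apply/funext => t; rewrite !scaler0 !addr0.
Qed.

End FixedPointDerivative.

Theorem theorem22 (R : realType) (n m : nat) (mX : 'M[R]_n) (mY : 'M[R]_m)
  (C : 'M[R]_(n, m)) (delta eps : R)
  (Cinf : 'M[R]_(n, m) -> 'M[R]_n -> 'M[R]_m -> 'M[R]_(n, m))
  (P : 'I_n -> 'I_m -> 'M[R]_(n, m))
  (f : 'I_n -> 'I_m -> 'I_n -> R) (g : 'I_n -> 'I_m -> 'I_m -> R) :
  row_stochastic mX -> row_stochastic mY ->
  (forall k l, 0 <= C k l) ->
  0 < delta <= 1 -> 0 < eps ->
  (* Cinf C' mX' mY' is the unique solution of the fixed-point equation *)
  (forall C' mX' mY', row_stochastic mX' -> row_stochastic mY' ->
     fixed_point eps delta C' mX' mY' (Cinf C' mX' mY') /\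
     (forall M, fixed_point eps delta C' mX' mY' M -> M = Cinf C' mX' mY')) ->
  (forall i j, opt_plan eps (fun k => mX i k) (fun l => mY j l)
                 (Cinf C mX mY) (P i j)) ->
  (forall i j, opt_dual eps (fun k => mX i k) (fun l => mY j l)
                 (Cinf C mX mY) (f i j) (g i j)) ->
  let A := 1%:M - (1 - delta) *: flat4 (fun i j k l => P i j k l) in
  let Fm := flat4 (fun i j (k k' : 'I_n) => f i j k' * (i == k)%:R) in
  let Gm := flat4 (fun i j (l l' : 'I_m) => g i j l' * (j == l)%:R) in
  let Delta := delta *: invmx A in
  let Gamma := (1 - delta) *: (invmx A *m Fm) in
  let Theta := (1 - delta) *: (invmx A *m Gm) in
  [/\ A \in unitmx,
      (* Delta^{kl}_{ij} = d Cinf_ij / d C_kl *)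
      (forall i j k l,
         is_derive (0 : R) (1 : R)
           (fun t => Cinf (C + t *: delta_mx k l) mX mY i j)
           (Delta (mxvec_index i j) (mxvec_index k l))),
      (* Gamma: derivative w.r.t. mX along any direction H keeping mX row-stochastic *)
      (forall H : 'M[R]_n, (forall k, \sum_(k' < n) H k k' = 0) ->
       forall i j,
         is_derive (0 : R) (1 : R)
           (fun t => Cinf C (mX + t *: H) mY i j)
           (\sum_(k < n) \sum_(k' < n)
              Gamma (mxvec_index i j) (mxvec_index k k') * H k k')) &
      (* Theta: derivative w.r.t. mY along any direction H keeping mY row-stochastic *)
      (forall H : 'M[R]_m, (forall l, \sum_(l' < m) H l l' = 0) ->
       forall i j,
         is_derive (0 : R) (1 : R)
           (fun t => Cinf C mX (mY + t *: H) i j)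
           (\sum_(l < m) \sum_(l' < m)
              Theta (mxvec_index i j) (mxvec_index l l') * H l l'))].
Proof.
move=> mX_rs mY_rs _ delta_01 eps_gt0 Cinf_spec P_opt fg_opt A Fm Gm Delta Gamma Theta.
have Cinf_fixed C' mX' mY' (mX'_rs : row_stochastic mX') (mY'_rs : row_stochastic mY') :=
  (Cinf_spec C' mX' mY' mX'_rs mY'_rs).1.
split; first exact: (unitmx_A delta_01 mX_rs P_opt).
- move=> i j k l; rewrite mxE.
  exact: (Cinf_derive_C eps_gt0 delta_01 mX_rs mY_rs Cinf_fixed P_opt fg_opt).
- move=> H H_row0 i j; rewrite -mulmx_mxvec_trE.
  exact: (Cinf_derive_mX eps_gt0 delta_01 mX_rs mY_rs Cinf_fixed P_opt fg_opt).
- move=> H H_row0 i j; rewrite -mulmx_mxvec_trE.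
  exact: (Cinf_derive_mY eps_gt0 delta_01 mX_rs mY_rs Cinf_fixed P_opt fg_opt).
Qed.
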